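(* Suppose an SCC $F:\Theta\to 2^Z\setminus\{\emptyset\}$ is pure-Nash-implemented by $\mathcal M=\langle M,g\rangle$. Then $g(M)\subseteq\Delta(Z^* )$.
   Context: Standing setup: $\mathcal I=\{1,\dots,I\}$ finite, $I\ge 3$; $\Theta$ finite or countably infinite; $Z$ finite; $Y=\Delta(Z)$; $u_i^\theta:Z\to\mathbb R$, $U_i^\theta(y)=\sum_zy_zu_i^\theta(z)$. A mechanism $\mathcal M=\langle M=\times_iM_i,g:M\to Y\rangle$ has countable $M_i$; $PNE^{(\mathcal M,\theta)}$ is the set of pure Nash equilibria at $\theta$. $F$ is pure-Nash-implemented by $\mathcal M$ if $\bigcup_{m\in PNE^{(\mathcal M,\theta)}}\mathrm{SUPP}(g[m])=F(\theta)$ for all $\theta$. A nonempty $E\subseteq Z$ is an $i$-$\theta$-max set if $E\subseteq\arg\max_{z\in E}u_i^\theta(z)$ and $E\subseteq\arg\max_{z\in Z}u_j^\theta(z)$ for all $j\ne i$; an $i$-max set if it is such for some $\theta$. $Z^*=\bigcup_{\theta\in\Theta}F(\theta)$ if $Z$ is an $i$-max set for some $i\in\mathcal I$, and $Z^*=Z$ otherwise. *)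

From mathcomp Require Import all_boot all_order all_algebra.
Set Implicit Arguments. Unset Strict Implicit. Unset Printing Implicit Defensive.
Import Order.TTheory GRing.Theory Num.Theory.
Local Open Scope ring_scope.

Section Defs.
Variables (R : realFieldType) (n : nat) (Theta : countType) (Z : finType).

Definition is_lottery (p : {ffun Z -> R}) : Prop :=
  (forall z, 0 <= p z) /\ \sum_(z : Z) p z = 1.

Definition SUPP (p : {ffun Z -> R}) : {set Z} := [set z | p z != 0].

Definition EU (u : Theta -> 'I_n -> Z -> R) (th : Theta) (i : 'I_n)
  (p : {ffun Z -> R}) : R := \sum_(z : Z) p z * u th i z.

Definition PNE (u : Theta -> 'I_n -> Z -> R) (M : 'I_n -> countType)
  (g : (forall i, M i) -> {ffun Z -> R}) (th : Theta) (m : forall i, M i) : Prop :=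
  forall (i : 'I_n) (mi : M i),
    EU u th i (g (dfwith m mi)) <= EU u th i (g m).

Definition pure_Nash_implements (u : Theta -> 'I_n -> Z -> R) (F : Theta -> {set Z})
  (M : 'I_n -> countType) (g : (forall i, M i) -> {ffun Z -> R}) : Prop :=
  forall th z, z \in F th <-> exists m, PNE u g th m /\ z \in SUPP (g m).

Definition imax_set (u : Theta -> 'I_n -> Z -> R) (i : 'I_n) (th : Theta)
  (E : {set Z}) : Prop :=
  E != set0 /\
  (forall z, z \in E -> forall z', z' \in E -> u th i z' <= u th i z) /\
  (forall j, j != i -> forall z, z \in E -> forall z' : Z, u th j z' <= u th j z).

(* membership in Z^*: if Z is an i-max set for some i then Z^* is the union of
   the F th, otherwise Z^* = Z *)
Definition in_Zstar (u : Theta -> 'I_n -> Z -> R) (F : Theta -> {set Z}) (z : Z) : Prop :=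
  (exists i th, imax_set u i th [set: Z]) -> exists th, z \in F th.

End Defs.

From mathcomp Require Import all_boot all_order all_algebra.
Set Implicit Arguments. Unset Strict Implicit. Unset Printing Implicit Defensive.
Import Order.TTheory GRing.Theory Num.Theory.
Local Open Scope ring_scope.

(* If [Z] itself is an i-theta-max set, every agent is indifferent among all
   outcomes at theta, so every lottery yields the same expected utility and
   every message profile is a pure Nash equilibrium at theta.  Implementation
   then puts the support of every [g m] inside [F theta]. *)

Section ConstantUtility.
Variables (R : realFieldType) (n : nat) (Theta : countType) (Z : finType).
Variables (u : Theta -> 'I_n -> Z -> R) (th : Theta).

Lemma imax_setT_indifferent (i : 'I_n) :
  imax_set u i th [set: Z] -> forall k z1 z2, u th k z1 = u th k z2.
Proof.
move=> [_ [maxi maxj]] k z1 z2; apply/eqP; rewrite eq_le.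
have [->|nki] := eqVneq k i; first by rewrite !maxi ?inE.
by rewrite !(maxj k nki) ?inE.
Qed.

Lemma EU_indifferent (k : 'I_n) (p : {ffun Z -> R}) (z0 : Z) :
  (forall z, u th k z = u th k z0) -> is_lottery p -> EU u th k p = u th k z0.
Proof.
move=> indiff [_ sum_p]; rewrite /EU.
under eq_bigr => z _ do rewrite indiff.
by rewrite -big_distrl /= sum_p mul1r.
Qed.

Lemma PNE_indifferent (M : 'I_n -> countType) (g : (forall i, M i) -> {ffun Z -> R})
    (z0 : Z) :
  (forall k z1 z2, u th k z1 = u th k z2) -> (forall m, is_lottery (g m)) ->
  forall m, PNE u g th m.
Proof.
move=> indiff lot m k mk.
by rewrite !(EU_indifferent (indiff k ^~ z0)) ?lot.
Qed.

End ConstantUtility.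

Theorem lemma6 (R : realFieldType) (n : nat) (Theta : countType) (Z : finType)
  (u : Theta -> 'I_n -> Z -> R) (F : Theta -> {set Z})
  (M : 'I_n -> countType) (g : (forall i, M i) -> {ffun Z -> R}) :
  (3 <= n)%N ->
  (forall th, F th != set0) ->
  (forall m, is_lottery (g m)) ->
  pure_Nash_implements u F g ->
  forall m z, z \in SUPP (g m) -> in_Zstar u F z.
Proof.
move=> _ _ lot impl m z z_supp [i [th Zmax]].
exists th; apply/impl; exists m; split=> //.
exact: PNE_indifferent z (imax_setT_indifferent Zmax) lot m.
Qed.
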